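(* Let $n\ge 2$, $m\ge 1$, let $V=\{v_1,\dots,v_m\}\subset H$ be data points, where $H=\{x\in\mathbb{R}^n : x_1+\cdots+x_n=0\}$ is identified with the tropical projective torus $\mathbb{R}^n/\mathbb{R}\mathbf{1}_n$. Let $w_1,\dots,w_m$ be any positive real weights. Then the weighted Fermat–Weber set $$\mathrm{FW}(V,w)=\operatorname{argmin}_{x\in H}\sum_{i=1}^m w_i\, d_\Delta(x,v_i)$$ is contained in the min-tropical convex hull $\mathrm{tconv}(V)$. More precisely, $\mathrm{FW}(V,w)$ is a covector cell of $\mathrm{tconv}(V)$. Furthermore, for every covector cell $P$ of $\mathrm{tconv}(V)$ there exist positive real weights $w_1,\dots,w_m$ such that $\mathrm{FW}(V,w)=P$.
   Context: $\mathbf{1}_n$ is the all-ones vector in $\mathbb{R}^n$; every class in $\mathbb{R}^n/\mathbb{R}\mathbf{1}_n$ has a unique representative in $H$, and points are given by these representatives. Write $v_i=(v_{i1},\dots,v_{in})$. The asymmetric tropical distance is, for $x,y\in H$, $d_\Delta(x,y)=n\max_{j\in[n]}(x_j-y_j)$ (for arbitrary representatives in $\mathbb{R}^n$ it is $n\max_j(x_j-y_j)+\sum_j(y_j-x_j)$). The min-tropical convex hull is $\mathrm{tconv}(V)=\{\min(\lambda_1\mathbf{1}_n+v_1,\dots,\lambda_m\mathbf{1}_n+v_m) : \lambda\in\mathbb{R}^m\}$ (coordinatewise minimum), taken modulo $\mathbb{R}\mathbf{1}_n$ and represented in $H$. Covector decomposition: for $x\in H$ and $i\in[m]$ let $S_i(x)=\{j\in[n]: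 x_j-v_{ij}=\max_{k}(x_k-v_{ik})\}$. For a tuple $S=(S_1,\dots,S_m)$ of nonempty subsets of $[n]$ put $C_S=\{x\in H : S_i\subseteq S_i(x)\text{ for all } i\}$. The nonempty sets $C_S$ are closed polyhedra forming a polyhedral complex (the covector decomposition of $H$ induced by $V$, i.e. the subdivision induced by the max-tropical hyperplanes centered at $v_1,\dots,v_m$); its cells are called covector cells. The covector cells of $\mathrm{tconv}(V)$ are the bounded covector cells; their union is $\mathrm{tconv}(V)$. *)

From HB Require Import structures.
From mathcomp Require Import all_boot all_order all_algebra.
From mathcomp Require Import reals.
Set Implicit Arguments. Unset Strict Implicit. Unset Printing Implicit Defensive.
Import Order.TTheory GRing.Theory Num.Theory.
Local Open Scope ring_scope.

Section Trop.
Variable R : realType.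

(* maximum / minimum of the finitely many values f j, j in [n]
   (seeded with the first value, so it is the true max/min when n > 0) *)
Definition vmax (n : nat) (f : 'I_n -> R) : R :=
  \big[Num.max/head 0 (map f (enum 'I_n))]_(j < n) f j.
Definition vmin (n : nat) (f : 'I_n -> R) : R :=
  \big[Num.min/head 0 (map f (enum 'I_n))]_(j < n) f j.

Definition inH (n : nat) (x : 'I_n -> R) : Prop := \sum_(j < n) x j = 0.

(* asymmetric tropical distance (formula valid for arbitrary representatives;
   for x, y in H it equals n * max_j (x_j - y_j)) *)
Definition dDelta (n : nat) (x y : 'I_n -> R) : R :=
  n%:R * vmax (fun j => x j - y j) + \sum_(j < n) (y j - x j).

Definition FWobj (n m : nat) (v : 'I_m -> 'I_n -> R) (w : 'I_m -> R)
  (x : 'I_n -> R) : R := \sum_(i < m) w i * dDelta x (v i).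
Definition FW (n m : nat) (v : 'I_m -> 'I_n -> R) (w : 'I_m -> R)
  (x : 'I_n -> R) : Prop :=
  inH x /\ forall y, inH y -> FWobj v w x <= FWobj v w y.

(* min-tropical convex hull, taken modulo R1 and represented in H:
   x in H is in tconv(V) iff x = c 1 + min_i (lambda_i 1 + v_i) for some
   lambda in R^m and c in R. *)
Definition tconv (n m : nat) (v : 'I_m -> 'I_n -> R) (x : 'I_n -> R) : Prop :=
  inH x /\ exists (lam : 'I_m -> R) (c : R),
    forall j, x j = c + vmin (fun i => lam i + v i j).

(* covector cell C_S for a tuple S = (S_1,...,S_m) of subsets of [n]:
   x in H with S_i contained in S_i(x) = argmax_j (x_j - v_ij) for all i. *)
Definition Ccell (n m : nat) (v : 'I_m -> 'I_n -> R) (S : 'I_m -> {set 'I_n})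
  (x : 'I_n -> R) : Prop :=
  inH x /\ forall i, forall j, j \in S i ->
    x j - v i j = vmax (fun k => x k - v i k).

(* S is a valid type (all S_i nonempty) and C_S is a (nonempty) covector cell
   which is bounded, i.e. a covector cell of tconv(V). *)
Definition is_bounded_cell (n m : nat) (v : 'I_m -> 'I_n -> R)
  (S : 'I_m -> {set 'I_n}) : Prop :=
  (forall i, S i != set0) /\
  (exists x, Ccell v S x) /\
  (exists B : R, forall x, Ccell v S x -> forall j, `|x j| <= B).

End Trop.

(* For z in H the objective is FWobj z = sum_i n w_i max_k (z_k - v_ik).  If y >= 0 has
   row sums n w_i and constant column sums, this equals
   sum_ij y_ij (max_k (z_k - v_ik) - (z_j - v_ij)) - sum_ij y_ij v_ij,
   a sum of nonnegative slacks minus a constant.  So as soon as one point of H has zero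
   slack, the Fermat-Weber set is the set of points of H with zero slack, that is, the
   covector cell whose i-th type is the support of the i-th row of y.
   For given weights, such a y and such a point come from LP duality for
   min sum_i n w_i t_i - W sum_j x_j  subject to  x_j - t_i <= v_ij  (W the total weight),
   whose dual is a transport problem; LP duality is derived from Farkas' lemma, proved by
   Fourier-Motzkin elimination.  Every column of y is nonzero, which puts the cell inside
   tconv(V), and the cell is bounded because FW(V, w) is.
   Conversely, in a bounded cell every coordinate j belongs to some type S_i (otherwise z_j
   can be pushed to -oo inside the cell), so spreading a unit mass over the i with j in S_i
   gives a plan supported by S; its row sums divided by n are the weights. *)

From HB Require Import structures.
From mathcomp Require Import all_boot all_order all_algebra.
From mathcomp Require Import boolp reals.
From mathcomp Require Import ring lra.
Set Implicit Arguments. Unset Strict Implicit. Unset Printing Implicit Defensive.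
Import Order.TTheory GRing.Theory Num.Theory.
Local Open Scope ring_scope.

Lemma sum_delta (R : pzSemiRingType) (I : finType) (p : I) (F : I -> R) :
  \sum_i (i == p)%:R * F i = F p.
Proof.
rewrite (bigD1 p) //= eqxx mul1r big1 ?addr0 // => i /negbTE ->.
by rewrite mul0r.
Qed.

Lemma sum_pair (R : nmodType) (I J : finType) (F : I * J -> R) :
  \sum_p F p = \sum_i \sum_j F (i, j).
Proof. by rewrite pair_bigA; apply: eq_bigr => -[]. Qed.

Lemma psumr_gt0 (R : numDomainType) (I : finType) (F : I -> R) (i0 : I) :
  (forall i, 0 <= F i) -> 0 < F i0 -> 0 < \sum_i F i.
Proof.
by move=> F_ge0 Fi0; rewrite (bigD1 i0) //= ltr_wpDr // sumr_ge0.
Qed.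

Lemma psumr_gt0P (R : numDomainType) (I : finType) (F : I -> R) :
  (forall i, 0 <= F i) -> 0 < \sum_i F i -> exists i, 0 < F i.
Proof.
move=> F_ge0 sum_gt0; have [|i /andP[_ Fi]] := @psumr_neq0P _ _ predT F (fun i _ => F_ge0 i).
  by apply/eqP; rewrite gt_eqF.
by exists i.
Qed.

Section Farkas.
Variable R : realFieldType.

Section FourierMotzkin.
Variables (d : nat) (K : finType) (a : K -> 'I_d.+1 -> R) (b : K -> R).
Let al k := a k ord0.

(* Fourier-Motzkin elimination of the coordinate [ord0]. *)
Definition fm_mult (k' : K + K * K) (k : K) : R :=
  match k' with
  | inl p => if al p == 0 then (k == p)%:R else 0
  | inr (p, q) =>
      if (0 < al p) && (al q < 0) then - al q * (k == p)%:R + al p * (k == q)%:R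
      else 0
  end.

Definition fm_row k' (j : 'I_d) := \sum_k fm_mult k' k * a k (lift ord0 j).
Definition fm_rhs k' := \sum_k fm_mult k' k * b k.

Lemma fm_mult_ge0 k' k : 0 <= fm_mult k' k.
Proof.
case: k' => [p|[p q]] /=; case: ifP => // /andP[? ?].
by rewrite addr_ge0 // mulr_ge0 // ?oppr_ge0 ltW.
Qed.

Lemma fm_multE k' (F : K -> R) : \sum_k fm_mult k' k * F k =
  match k' with
  | inl p => if al p == 0 then F p else 0
  | inr (p, q) => if (0 < al p) && (al q < 0) then - al q * F p + al p * F q else 0
  end.
Proof.
case: k' => [p|[p q]] /=; (case: ifP => _; last by rewrite big1 // => k _; rewrite mul0r).
  by rewrite sum_delta.
under eq_bigr do rewrite mulrDl -!mulrA.
by rewrite big_split /= -!mulr_sumr !sum_delta.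
Qed.

Lemma fm_mult_elim k' : \sum_k fm_mult k' k * al k = 0.
Proof.
rewrite fm_multE; case: k' => [p|[p q]]; case: ifP => //; first by move/eqP.
by rewrite mulNr mulrC addNr.
Qed.

Definition extend0 (x : 'I_d -> R) (s : R) (j : 'I_d.+1) : R :=
  if unlift ord0 j is Some j' then x j' else s.

Lemma fm_lift :
  (exists x, forall k', \sum_j fm_row k' j * x j <= fm_rhs k') ->
  exists x, forall k, \sum_j a k j * x j <= b k.
Proof.
case=> x x_feas; pose A k := \sum_j a k (lift ord0 j) * x j.
have fm_rowE k' : \sum_j fm_row k' j * x j = \sum_k fm_mult k' k * A k.
  under [RHS]eq_bigr do rewrite mulr_sumr.
  rewrite exchange_big; apply: eq_bigr => j _.
  by rewrite /fm_row mulr_suml; apply: eq_bigr => k _; rewrite mulrA.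
(* Row k asks for (b k - A k) / al k to bound the new coordinate from below if al k < 0
   and from above if al k > 0; the combined rows say the bounds are compatible. *)
pose bound k := (b k - A k) / al k.
pose s := \big[Num.max/ \big[Num.min/0]_(p | 0 < al p) bound p]_(q | al q < 0) bound q.
have s_ge q : al q < 0 -> bound q <= s by move=> ?; apply: le_bigmax_cond.
have s_le p : 0 < al p -> s <= bound p.
  move=> alp; apply: bigmax_le => [|q alq]; first exact: bigmin_le_cond.
  have := x_feas (inr (p, q)); rewrite fm_rowE /fm_rhs !fm_multE alp alq /=.
  rewrite /bound ler_ndivrMr // mulrAC ler_pdivrMr // => combined.
  by move: alp alq combined; clearbody al; nra.
exists (extend0 x s) => k; rewrite big_ord_recl /extend0 unlift_none.
under eq_bigr do rewrite liftK.
rewrite -/(al k) -/(A k) addrC.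
case: (ltgtP (al k) 0) => alk.
- by have := s_ge _ alk; rewrite /bound ler_ndivrMr // mulrC; lra.
- by have := s_le _ alk; rewrite /bound ler_pdivlMr // mulrC; lra.
- by have := x_feas (inl k); rewrite fm_rowE /fm_rhs !fm_multE alk eqxx mul0r addr0.
Qed.

End FourierMotzkin.

Lemma farkas_ord d (K : finType) (a : K -> 'I_d -> R) (b : K -> R) :
  ~ (exists x, forall k, \sum_j a k j * x j <= b k) ->
  exists l : K -> R, [/\ forall k, 0 <= l k,
    forall j, \sum_k l k * a k j = 0 & \sum_k l k * b k < 0].
Proof.
elim: d K a b => [|d IH] K a b infeasible.
  have [k bk] : exists k, b k < 0.
    apply: contrapT => nneg; apply: infeasible; exists (fun _ => 0) => k.
    by rewrite big_ord0 leNgt; apply/negP => bk; apply: nneg; exists k.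
  by exists (fun k' => (k' == k)%:R); split=> [k'||]; rewrite ?ler0n ?sum_delta //; case.
have /IH [l' [l'_ge0 l'_row l'_rhs]] :
    ~ exists x, forall k', \sum_j fm_row a k' j * x j <= fm_rhs a b k'.
  by move/fm_lift.
pose l k := \sum_k' l' k' * fm_mult a k' k.
have lE (F : K -> R) : \sum_k l k * F k = \sum_k' l' k' * \sum_k fm_mult a k' k * F k.
  under eq_bigr do rewrite mulr_suml.
  rewrite exchange_big; apply: eq_bigr => k' _; rewrite mulr_sumr.
  by apply: eq_bigr => k _; rewrite mulrA.
exists l; split.
- by move=> k; apply: sumr_ge0 => k' _; rewrite mulr_ge0 ?fm_mult_ge0.
- move=> j; rewrite lE; case: (unliftP ord0 j) => [j'|] ->; first exact: l'_row.
  by rewrite big1 // => k' _; rewrite fm_mult_elim mulr0.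
- by rewrite lE.
Qed.

Lemma farkas (V K : finType) (a : K -> V -> R) (b : K -> R) :
  ~ (exists x, forall k, \sum_v a k v * x v <= b k) ->
  exists l : K -> R, [/\ forall k, 0 <= l k,
    forall v, \sum_k l k * a k v = 0 & \sum_k l k * b k < 0].
Proof.
move=> infeasible.
have reindex_val (x : 'I_#|V| -> R) k :
    \sum_j a k (enum_val j) * x j = \sum_v a k v * x (enum_rank v).
  rewrite (reindex (@enum_rank V)) /=; last exact/onW_bij/enum_rank_bij.
  by under eq_bigr do rewrite enum_rankK.
have [|l [l_ge0 l_a l_b]] := @farkas_ord #|V| K (fun k j => a k (enum_val j)) b.
  by case=> x x_feas; apply: infeasible; exists (x \o enum_rank) => k; rewrite -reindex_val.
by exists l; split=> // v; rewrite -(enum_rankK v).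
Qed.

End Farkas.

Section Duality.
Variables (R : realFieldType) (V K : finType).
Variables (A : K -> V -> R) (b : K -> R) (c : V -> R).

Let sign (s : bool) : R := if s then 1 else -1.

(* The system  A x <= b,  y >= 0,  y A = c (as two inequalities),  y b <= c x
   in the unknown z = (x, y) : V + K -> R. *)
Definition duality_row (r : (K + K) + (V * bool + unit)) (u : V + K) : R :=
  match r, u with
  | inl (inl k), inl v => A k v
  | inl (inr k), inr k' => - (k' == k)%:R
  | inr (inl (v, s)), inr k => sign s * A k v
  | inr (inr _), inl v => - c v
  | inr (inr _), inr k => b k
  | _, _ => 0
  end.

Definition duality_rhs (r : (K + K) + (V * bool + unit)) : R :=
  match r with
  | inl (inl k) => b k
  | inr (inl (v, s)) => sign s * c v
  | _ => 0
  end.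

Lemma duality_rowE r (z : V + K -> R) :
  \sum_u duality_row r u * z u =
  match r with
  | inl (inl k) => \sum_v A k v * z (inl v)
  | inl (inr k) => - z (inr k)
  | inr (inl (v, s)) => sign s * \sum_k z (inr k) * A k v
  | inr (inr _) => \sum_k z (inr k) * b k - \sum_v c v * z (inl v)
  end.
Proof.
rewrite big_sumType /=; case: r => [[k|k]|[[v s]|_]] /=.
- by rewrite -mulr_sumr mul0r addr0.
- by rewrite -mulr_sumr mul0r add0r; under eq_bigr do rewrite mulNr; rewrite sumrN sum_delta.
- rewrite -[X in X + _]mulr_sumr mul0r add0r mulr_sumr; apply: eq_bigr => k _.
  by rewrite -mulrA [A k v * _]mulrC.
- rewrite addrC -sumrN; congr (_ + _); apply: eq_bigr => i _; first exact: mulrC.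
  exact: mulNr.
Qed.

Lemma sum_duality_index (F : (K + K) + (V * bool + unit) -> R) :
  \sum_r F r = \sum_k F (inl (inl k)) + \sum_k F (inl (inr k))
    + \sum_v (F (inr (inl (v, true))) + F (inr (inl (v, false)))) + F (inr (inr tt)).
Proof.
rewrite !big_sumType /= (big_pred1 tt); last by case.
rewrite !addrA sum_pair; congr (_ + _ + _).
by apply: eq_bigr => v _; rewrite big_bool.
Qed.

Section Combination.
Variable l : (K + K) + (V * bool + unit) -> R.
Let alpha k := l (inl (inl k)).
Let gamma k := l (inl (inr k)).
Let delta v := l (inr (inl (v, true))) - l (inr (inl (v, false))).
Let tau := l (inr (inr tt)).

Lemma duality_row_comb (x : V -> R) (y : K -> R) :
  \sum_r l r * \sum_u duality_row r u * (match u with inl v => x v | inr k => y k end) =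
  \sum_k alpha k * (\sum_v A k v * x v) - \sum_k gamma k * y k
  + \sum_v delta v * (\sum_k y k * A k v) + tau * (\sum_k y k * b k - \sum_v c v * x v).
Proof.
rewrite (eq_bigr _ (fun r _ => congr1 (fun t => l r * t) (duality_rowE r _))).
rewrite sum_duality_index /=.
congr (_ + _ + _ + _); first by rewrite -sumrN; apply: eq_bigr => k _; rewrite mulrN.
by apply: eq_bigr => v _; rewrite /sign mul1r mulN1r mulrN mulrBl.
Qed.

Lemma duality_rhs_comb :
  \sum_r l r * duality_rhs r = \sum_k alpha k * b k + \sum_v delta v * c v.
Proof.
rewrite sum_duality_index /= mulr0 addr0 [X in _ + X + _]big1 ?addr0 => [|k _].
  by congr (_ + _); apply: eq_bigr => v _; rewrite /sign mul1r mulN1r mulrN mulrBl.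
exact: mulr0.
Qed.

Hypothesis l_row : forall u, \sum_r l r * duality_row r u = 0.

Lemma duality_comb_eq0 x y :
  \sum_k alpha k * (\sum_v A k v * x v) - \sum_k gamma k * y k
  + \sum_v delta v * (\sum_k y k * A k v) + tau * (\sum_k y k * b k - \sum_v c v * x v) = 0.
Proof.
rewrite -duality_row_comb; under eq_bigr do rewrite mulr_sumr.
rewrite exchange_big big1 // => u _.
by under eq_bigr do rewrite mulrA; rewrite -mulr_suml l_row mul0r.
Qed.

Lemma duality_comb_primal x :
  \sum_k alpha k * (\sum_v A k v * x v) = tau * \sum_v c v * x v.
Proof.
have := duality_comb_eq0 x (fun=> 0); under [X in _ + X + _]eq_bigr do rewrite -mulr_sumr mul0r.
by rewrite -!mulr_suml -mulr_sumr !mulr0 mul0r subr0 addr0 sub0r mulrN => /subr0_eq.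
Qed.

Lemma duality_comb_dual y :
  \sum_k gamma k * y k = \sum_v delta v * (\sum_k y k * A k v) + tau * \sum_k y k * b k.
Proof.
have := duality_comb_eq0 (fun=> 0) y; under [X in X - _]eq_bigr do rewrite -mulr_suml mulr0.
by rewrite -!mulr_suml !mulr0 subr0 sub0r; lra.
Qed.

(* Weak duality against a Farkas certificate: for tau = 0 through the feasible points
   of both problems, for tau > 0 through the rescaled dual point alpha / tau. *)
Lemma duality_no_certificate :
  (exists x, forall k, \sum_v A k v * x v <= b k) ->
  (exists y, (forall k, 0 <= y k) /\ forall v, \sum_k y k * A k v = c v) ->
  (forall r, 0 <= l r) -> 0 <= \sum_r l r * duality_rhs r.
Proof.
move=> [x0 x0_feas] [y0 [y0_ge0 y0_dual]] l_ge0.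
have gamma_dot_ge0 y : (forall k, 0 <= y k) -> 0 <= \sum_k gamma k * y k.
  by move=> y_ge0; apply: sumr_ge0 => k _; rewrite mulr_ge0 ?l_ge0.
rewrite duality_rhs_comb; have := l_ge0 (inr (inr tt)).
rewrite le_eqVlt => /orP[/eqP tau0|tau_gt0].
- have primal : \sum_k alpha k * (\sum_v A k v * x0 v) <= \sum_k alpha k * b k.
    by apply: ler_sum => k _; rewrite ler_wpM2l ?l_ge0.
  have dual : \sum_v delta v * (\sum_k y0 k * A k v) = \sum_v delta v * c v.
    by apply: eq_bigr => v _; rewrite y0_dual.
  have := duality_comb_dual y0; have := duality_comb_primal x0.
  have := gamma_dot_ge0 _ y0_ge0; rewrite dual /tau -tau0 !mul0r addr0; lra.
- have mixed : \sum_v delta v * (\sum_k alpha k * A k v)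
      = \sum_k alpha k * (\sum_v A k v * delta v).
    under eq_bigr do rewrite mulr_sumr.
    rewrite exchange_big; apply: eq_bigr => k _; rewrite mulr_sumr.
    by apply: eq_bigr => v _; rewrite mulrCA [delta v * _]mulrC.
  have cd : \sum_v c v * delta v = \sum_v delta v * c v.
    by apply: eq_bigr => v _; rewrite mulrC.
  have := duality_comb_dual alpha.
  rewrite mixed duality_comb_primal cd -mulrDr addrC => gap.
  by rewrite -(pmulr_rge0 _ tau_gt0) -gap gamma_dot_ge0 // => k; apply: l_ge0.
Qed.

End Combination.

Lemma lp_strong_duality :
  (exists x, forall k, \sum_v A k v * x v <= b k) ->
  (exists y, (forall k, 0 <= y k) /\ forall v, \sum_k y k * A k v = c v) ->
  exists x y, [/\ forall k, \sum_v A k v * x v <= b k, forall k, 0 <= y k,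
    forall v, \sum_k y k * A k v = c v & \sum_k y k * b k <= \sum_v c v * x v].
Proof.
move=> primal_feas dual_feas; apply: contrapT => no_opt.
have [|l [l_ge0 l_row l_rhs]] := farkas (a := duality_row) (b := duality_rhs).
  case=> z z_feas; apply: no_opt.
  exists (fun v => z (inl v)), (fun k => z (inr k)); split.
  - by move=> k; have := z_feas (inl (inl k)); rewrite duality_rowE.
  - by move=> k; have := z_feas (inl (inr k)); rewrite duality_rowE oppr_le0.
  - move=> v; have := z_feas (inr (inl (v, true))); have := z_feas (inr (inl (v, false))).
    by rewrite !duality_rowE /= /sign !mul1r !mulN1r; lra.
  - by have := z_feas (inr (inr tt)); rewrite duality_rowE subr_le0.
have := duality_no_certificate l_row primal_feas dual_feas l_ge0.
by rewrite leNgt l_rhs.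
Qed.

End Duality.

Section Vectors.
Variables (R : realType) (n : nat).
Implicit Types (f : 'I_n -> R) (a : R).

Lemma head_map_enum f (j0 : 'I_n) :
  head 0 (map f (enum 'I_n)) = f (head j0 (enum 'I_n)).
Proof. have : j0 \in enum 'I_n by rewrite mem_enum. by case: (enum 'I_n). Qed.

Lemma vmax_ge f j : f j <= vmax f.
Proof. exact: le_bigmax. Qed.

Lemma vmax_le f a (j0 : 'I_n) : (forall j, f j <= a) -> vmax f <= a.
Proof. by move=> f_le; apply: bigmax_le => //; rewrite (head_map_enum f j0). Qed.

Lemma vmin_le f j : vmin f <= f j.
Proof. exact: bigmin_le. Qed.

Lemma vmin_ge f a (j0 : 'I_n) : (forall j, a <= f j) -> a <= vmin f.
Proof. by move=> f_ge; apply: le_bigmin => //; rewrite (head_map_enum f j0). Qed.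

Lemma vmax_addr f c (j0 : 'I_n) : vmax (fun k => f k + c) = vmax f + c.
Proof.
apply: le_anti; rewrite (vmax_le j0) => [|k]; last by rewrite lerD2r vmax_ge.
by rewrite -lerBrDr (vmax_le j0) // => k; rewrite lerBrDr (vmax_ge (fun k => f k + c)).
Qed.

Lemma inH_norm_le (z U : 'I_n -> R) :
  inH z -> (forall j, z j <= U j) -> forall j, `|z j| <= \sum_k `|U k|.
Proof.
move=> z_inH z_le j.
have zj : z j = - \sum_(k | k != j) z k.
  by apply/eqP; rewrite -addr_eq0; move: z_inH; rewrite /inH (bigD1 j) //= => ->.
have others : \sum_(k | k != j) z k <= \sum_(k | k != j) `|U k|.
  by apply: ler_sum => k _; apply: le_trans (z_le k) (ler_norm _).
have others_ge0 : 0 <= \sum_(k | k != j) `|U k| by rewrite sumr_ge0.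
have Uj := ler_norm (U j); have Uj_ge0 := normr_ge0 (U j); have zUj := z_le j.
by rewrite (bigD1 j) //= ler_norml; apply/andP; split; lra.
Qed.

End Vectors.

Section FermatWeber.
Variables (R : realType) (n m : nat) (v : 'I_m -> 'I_n -> R).
Hypotheses (n_gt0 : (0 < n)%N) (v_inH : forall i, inH (v i)).
Let j0 : 'I_n := Ordinal n_gt0.

(* For z in H, dDelta z (v i) = n * maxdiff z i. *)
Definition maxdiff (z : 'I_n -> R) i := vmax (fun k => z k - v i k).

Definition slack (y : 'I_m -> 'I_n -> R) z :=
  \sum_i \sum_j y i j * (maxdiff z i - (z j - v i j)).

Definition transport_plan (w : 'I_m -> R) (mu : R) (y : 'I_m -> 'I_n -> R) :=
  [/\ forall i j, 0 <= y i j, forall i, \sum_j y i j = n%:R * w i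
    & forall j, \sum_i y i j = mu].

Lemma maxdiff_ge z i j : z j - v i j <= maxdiff z i.
Proof. exact: (vmax_ge (fun k => z k - v i k)). Qed.

Lemma maxdiff_le z i a : (forall j, z j - v i j <= a) -> maxdiff z i <= a.
Proof. exact: (vmax_le j0). Qed.

Lemma maxdiff_addr z c i : maxdiff (fun k => z k + c) i = maxdiff z i + c.
Proof.
by rewrite /maxdiff -(vmax_addr _ _ j0); congr vmax; apply: funext => k; rewrite addrAC.
Qed.

Lemma maxdiff_ge0 z i : inH z -> 0 <= maxdiff z i.
Proof.
move=> z_inH; have : \sum_j (z j - v i j) <= \sum_(j < n) maxdiff z i.
  by apply: ler_sum => j _; apply: maxdiff_ge.
by rewrite sumrB z_inH (v_inH i) subrr sumr_const card_ord -mulr_natl pmulr_rge0 ?ltr0n.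
Qed.

Lemma FWobjE w z : inH z -> FWobj v w z = \sum_i n%:R * w i * maxdiff z i.
Proof.
move=> z_inH; apply: eq_bigr => i _.
by rewrite /dDelta sumrB z_inH (v_inH i) subr0 addr0 mulrCA mulrA.
Qed.

Lemma slackE w mu y z : transport_plan w mu y ->
  slack y z = \sum_i n%:R * w i * maxdiff z i - mu * \sum_j z j
              + \sum_i \sum_j y i j * v i j.
Proof.
case=> _ row col.
have split_row i : \sum_j y i j * (maxdiff z i - (z j - v i j)) =
    n%:R * w i * maxdiff z i - \sum_j y i j * z j + \sum_j y i j * v i j.
  rewrite -row mulr_suml -sumrB -big_split /=; apply: eq_bigr => j _; ring.
rewrite /slack (eq_bigr _ (fun i _ => split_row i)) big_split sumrB /=.
congr (_ - _ + _); rewrite exchange_big mulr_sumr; apply: eq_bigr => j _.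
by rewrite -mulr_suml col mulrC.
Qed.

Lemma slack_ge0 y z : (forall i j, 0 <= y i j) -> 0 <= slack y z.
Proof.
move=> y_ge0; apply: sumr_ge0 => i _; apply: sumr_ge0 => j _.
by rewrite mulr_ge0 // subr_ge0 maxdiff_ge.
Qed.

Lemma slack_eq0P y z : (forall i j, 0 <= y i j) ->
  slack y z = 0 <-> forall i j, 0 < y i j -> z j - v i j = maxdiff z i.
Proof.
move=> y_ge0.
have term_ge0 i j : 0 <= y i j * (maxdiff z i - (z j - v i j)).
  by rewrite mulr_ge0 // subr_ge0 maxdiff_ge.
split=> [slack0 i j yij|tight].
  have row0 : \sum_j y i j * (maxdiff z i - (z j - v i j)) = 0.
    by apply: (psumr_eq0P _ slack0) => // i' _; exact: sumr_ge0.
  move/eqP: ((psumr_eq0P (fun j _ => term_ge0 i j) row0) j isT).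
  by rewrite mulf_eq0 gt_eqF //= subr_eq0 => /eqP.
apply: big1 => i _; apply: big1 => j _.
have := y_ge0 i j; rewrite le_eqVlt => /orP[/eqP <-|yij]; first by rewrite mul0r.
by rewrite tight // subrr mulr0.
Qed.

Lemma slack_addr y z c : slack y (fun k => z k + c) = slack y z.
Proof.
apply: eq_bigr => i _; apply: eq_bigr => j _.
by rewrite maxdiff_addr; congr (_ * _); ring.
Qed.

Lemma FW_iff_Ccell w mu y (S : 'I_m -> {set 'I_n}) x0 :
  transport_plan w mu y -> (forall i j, (j \in S i) = (0 < y i j)) ->
  inH x0 -> slack y x0 = 0 ->
  forall z, FW v w z <-> Ccell v S z.
Proof.
move=> plan S_supp x0_inH slack_x0 z; have [y_ge0 _ _] := plan.
have obj u : inH u -> FWobj v w u = slack y u - \sum_i \sum_j y i j * v i j.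
  by move=> u_inH; rewrite (slackE _ plan) FWobjE // u_inH mulr0 subr0 addrK.
have cell u : Ccell v S u <-> inH u /\ slack y u = 0.
  rewrite slack_eq0P //; split=> -[u_inH tight]; split=> // i j.
    by move=> yij; apply: tight; rewrite S_supp.
  by rewrite S_supp; apply: tight.
rewrite cell; split=> [[z_inH z_min]|[z_inH slack_z]]; split=> //.
  apply: le_anti; rewrite slack_ge0 // andbT.
  by have := z_min _ x0_inH; rewrite !obj // slack_x0 lerD2r.
by move=> u u_inH; rewrite !obj // slack_z lerD2r slack_ge0.
Qed.

Lemma Ccell_tconv (S : 'I_m -> {set 'I_n}) z :
  (forall j, exists i, j \in S i) -> Ccell v S z -> tconv v z.
Proof.
move=> S_cover [z_inH tight]; split=> //.
exists (maxdiff z), 0 => j; rewrite add0r; have [i ji] := S_cover j.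
apply: le_anti; rewrite (vmin_ge i) => [|i'] /=; last by rewrite -lerBlDr maxdiff_ge.
by apply: le_trans (vmin_le _ i) _; rewrite -lerBrDr /maxdiff -(tight i j ji).
Qed.

Lemma FW_bounded w (i0 : 'I_m) : (forall i, 0 < w i) ->
  exists B, forall z, FW v w z -> forall j, `|z j| <= B.
Proof.
move=> w_gt0; have nw_gt0 : 0 < n%:R * w i0 by rewrite mulr_gt0 ?ltr0n.
have zero_inH : inH (fun _ : 'I_n => 0 : R) by rewrite /inH big1.
pose F0 := FWobj v w (fun=> 0).
exists (\sum_k `|v i0 k + F0 / (n%:R * w i0)|) => z [z_inH z_min].
apply: inH_norm_le => // k; rewrite -lerBlDl.
apply: le_trans (maxdiff_ge _ _ _) _; rewrite ler_pdivlMr // mulrC.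
apply: le_trans (z_min _ zero_inH); rewrite FWobjE // (bigD1 i0) //= lerDl.
by apply: sumr_ge0 => i _; rewrite !mulr_ge0 ?ler0n ?maxdiff_ge0 // ltW.
Qed.

Lemma FW_primal_dual w : (forall i, 0 < w i) ->
  exists x t y, [/\ forall i j, x j - t i <= v i j, transport_plan w (\sum_i w i) y
    & \sum_i \sum_j y i j * v i j <= (\sum_i w i) * \sum_j x j - \sum_i n%:R * w i * t i].
Proof.
move=> w_gt0.
(* Unknowns (x, t) : 'I_n + 'I_m and one row x_j - t_i <= v_ij per pair (i, j). *)
pose A (p : 'I_m * 'I_n) (u : 'I_n + 'I_m) : R :=
  match u with inl j => (j == p.2)%:R | inr i => - (i == p.1)%:R end.
pose c (u : 'I_n + 'I_m) : R :=
  match u with inl _ => \sum_i w i | inr i => - (n%:R * w i) end.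
have AE (z : 'I_n + 'I_m -> R) p : \sum_u A p u * z u = z (inl p.2) - z (inr p.1).
  rewrite big_sumType /= sum_delta; under eq_bigr do rewrite mulNr.
  by rewrite sumrN sum_delta.
have yAE (y : 'I_m * 'I_n -> R) u : \sum_p y p * A p u =
    match u with inl j => \sum_i y (i, j) | inr i => - \sum_j y (i, j) end.
  rewrite sum_pair; case: u => [j|i] /=.
    by apply: eq_bigr => i _; under eq_bigr do rewrite mulrC eq_sym; rewrite sum_delta.
  under eq_bigr do rewrite -mulr_suml mulrN mulrC eq_sym.
  by rewrite sumrN sum_delta.
have [||x [y [primal y_ge0 dual gap]]] :=
    lp_strong_duality (A := A) (b := fun p => v p.1 p.2) (c := c).
- exists (fun u => if u is inr i then - vmin (v i) else 0) => p.
  by rewrite AE /= sub0r opprK vmin_le.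
- exists (fun p => w p.1); split=> [p|[j|i]]; rewrite ?yAE ?ltW //=.
  by rewrite sumr_const card_ord mulr_natl.
exists (fun j => x (inl j)), (fun i => x (inr i)), (fun i j => y (i, j)); split.
- by move=> i j; have := primal (i, j); rewrite AE.
- split=> [i j|i|j]; first exact: y_ge0.
    by apply: oppr_inj; rewrite -(yAE y (inr i)) dual.
  by rewrite -(yAE y (inl j)) dual.
- move: gap; rewrite sum_pair big_sumType /= mulr_sumr -sumrN.
  by under [X in _ + X]eq_bigr do rewrite mulNr.
Qed.

Lemma FW_optimal_plan w : (forall i, 0 < w i) ->
  exists y x, [/\ transport_plan w (\sum_i w i) y, inH x & slack y x = 0].
Proof.
move=> w_gt0; have [x [t [y [primal plan gap]]]] := FW_primal_dual w_gt0.
have slack_x : slack y x = 0.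
  apply: le_anti; rewrite slack_ge0 ?andbT; last by case: plan.
  have obj_le : \sum_i n%:R * w i * maxdiff x i <= \sum_i n%:R * w i * t i.
    apply: ler_sum => i _; apply: ler_wpM2l; first by rewrite mulr_ge0 ?ler0n ?ltW.
    by apply: maxdiff_le => j; rewrite lerBlDr -lerBlDl.
  by rewrite (slackE _ plan); lra.
exists y, (fun k => x k - (\sum_j x j) / n%:R); split=> //; last by rewrite slack_addr.
rewrite /inH sumrB sumr_const card_ord -[(_ / _) *+ _]mulr_natr divfK ?subrr //.
by rewrite pnatr_eq0 -lt0n.
Qed.

Lemma FW_is_bounded_cell w (i0 : 'I_m) : (forall i, 0 < w i) ->
  (forall x, FW v w x -> tconv v x) /\
  exists S, is_bounded_cell v S /\ forall x, FW v w x <-> Ccell v S x.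
Proof.
move=> w_gt0; have [y [x [plan x_inH slack_x]]] := FW_optimal_plan w_gt0.
have [y_ge0 row col] := plan.
pose S i := [set j | 0 < y i j].
have S_supp i j : (j \in S i) = (0 < y i j) by rewrite inE.
have FW_S := FW_iff_Ccell plan S_supp x_inH slack_x.
have S_cover j : exists i, j \in S i.
  have [|i yij] := psumr_gt0P (y_ge0^~ j); last by exists i; rewrite S_supp.
  by rewrite col (psumr_gt0 (i0 := i0)) // => i; rewrite ltW.
split=> [z /FW_S|]; first exact: Ccell_tconv.
exists S; split=> //; split; [|split].
- move=> i; apply/set0Pn.
  have [|j yij] := psumr_gt0P (y_ge0 i); last by exists j; rewrite S_supp.
  by rewrite row mulr_gt0 ?ltr0n.
- exists x; split=> // i j; rewrite S_supp.
  by move: slack_x; rewrite slack_eq0P //; apply.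
- have [B FW_le] := FW_bounded i0 w_gt0.
  by exists B => z /FW_S; exact: FW_le.
Qed.

Lemma Ccell_uncovered_shift (S : 'I_m -> {set 'I_n}) j s x :
  (forall i, j \notin S i) -> 0 <= s -> Ccell v S x ->
  Ccell v S (fun k => x k + s - (k == j)%:R * (n%:R * s)).
Proof.
move=> j_uncovered s_ge0 [x_inH tight]; split.
  rewrite /inH sumrB big_split /= x_inH sum_delta sumr_const card_ord.
  by rewrite add0r mulr_natl subrr.
move=> i k ki; apply: le_anti; rewrite vmax_ge /=; apply: (vmax_le j0) => k'.
have kj : (k == j) = false by apply: contraNF (j_uncovered i) => /eqP <-.
have shift_ge0 : 0 <= (k' == j)%:R * (n%:R * s) by rewrite !mulr_ge0 ?ler0n.
have := maxdiff_ge x i k'; have := tight i k ki; rewrite -/(maxdiff x i) kj mul0r.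
lra.
Qed.

Lemma bounded_cell_cover (S : 'I_m -> {set 'I_n}) :
  (1 < n)%N -> is_bounded_cell v S -> forall j, exists i, j \in S i.
Proof.
move=> n_gt1 [_ [[x x_cell] [B cell_bounded]]] j; apply: contrapT => uncovered.
have j_uncovered i : j \notin S i by apply/negP => ji; apply: uncovered; exists i.
pose s := `|x j| + `|B| + 1.
have s_ge0 : 0 <= s by rewrite /s; have := normr_ge0 (x j); have := normr_ge0 B; lra.
have := cell_bounded _ (Ccell_uncovered_shift j_uncovered s_ge0 x_cell) j.
rewrite eqxx mul1r ler_norml => /andP[lower _].
have : 2 * s <= n%:R * s by rewrite ler_wpM2r // ler_nat.
by move: lower; rewrite /s; have := ler_norm (x j); have := ler_norm B; lra.
Qed.

Lemma bounded_cell_FW (S : 'I_m -> {set 'I_n}) :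
  (1 < n)%N -> is_bounded_cell v S ->
  exists w, (forall i, 0 < w i) /\ forall x, FW v w x <-> Ccell v S x.
Proof.
move=> n_gt1 S_bounded; have S_cover := bounded_cell_cover n_gt1 S_bounded.
have [S_ne [[x [x_inH x_tight]] _]] := S_bounded.
pose cover_count j : R := #|[pred i | j \in S i]|%:R.
have count_gt0 j : 0 < cover_count j.
  by have [i ji] := S_cover j; rewrite ltr0n; apply/card_gt0P; exists i.
pose y i j := if j \in S i then (cover_count j)^-1 else 0.
pose w i := (\sum_j y i j) / n%:R.
have y_ge0 i j : 0 <= y i j by rewrite /y; case: ifP => _; rewrite // invr_ge0 ltW.
have S_supp i j : (j \in S i) = (0 < y i j).
  by rewrite /y; case: ifP => _; rewrite ?invr_gt0 ?count_gt0 ?ltxx.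
have plan : transport_plan w 1 y.
  split=> // [i|j]; first by rewrite /w mulrC divfK // pnatr_eq0 -lt0n ltnW.
  by rewrite /y -big_mkcond sumr_const -(mulr_natr (cover_count j)^-1) mulVf ?gt_eqF.
exists w; split.
  move=> i; rewrite /w divr_gt0 ?ltr0n ?(ltnW n_gt1) //.
  have /set0Pn [j ji] := S_ne i.
  by apply: (psumr_gt0 (i0 := j)) => //; rewrite -S_supp.
apply: (FW_iff_Ccell plan S_supp x_inH); apply/slack_eq0P => // i j.
by rewrite -S_supp; apply: x_tight.
Qed.

End FermatWeber.

Theorem theorem1p1 (R : realType) (n m : nat) (v : 'I_m -> 'I_n -> R) :
  (2 <= n)%N -> (1 <= m)%N ->
  injective v -> (forall i, inH (v i)) ->
  (forall w : 'I_m -> R, (forall i, 0 < w i) ->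
     (forall x, FW v w x -> tconv v x) /\
     (exists S : 'I_m -> {set 'I_n},
        is_bounded_cell v S /\ (forall x, FW v w x <-> Ccell v S x))) /\
  (forall S : 'I_m -> {set 'I_n}, is_bounded_cell v S ->
     exists w : 'I_m -> R, (forall i, 0 < w i) /\
       (forall x, FW v w x <-> Ccell v S x)).
Proof.
move=> n_gt1 m_gt0 _ v_inH; have n_gt0 := ltnW n_gt1.
split=> [w w_gt0|S S_bounded]; last exact: bounded_cell_FW.
exact: (FW_is_bounded_cell n_gt0 v_inH (Ordinal m_gt0) w_gt0).
Qed.
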